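(* Let $m\ge 1$ and $1\le t\le 2^{m-1}$ be integers and let $p=t/2^m$ (so $0<p\le 1/2$). Let $f:\{0,1\}^n\to\mathbb{R}$ and let $g=\mathrm{Red}(f):\{0,1\}^{mn}\to\mathbb{R}$ be the reduced function defined below. Then for every $1\le d\le n$, \[ \sum_{S\subseteq\{1,\dots,mn\},\,|S|=d}\hat g(S)^2\;\ge\;\Big(\frac{p\lfloor \log(1/p)\rfloor}{1-p}\Big)^d\sum_{S\subseteq\{1,\dots,n\},\,|S|=d}\hat f(S)^2, \] where the Fourier–Walsh coefficients of $g$ are taken with respect to the uniform measure $\mu_{1/2}$ on $\{0,1\}^{mn}$ and those of $f$ with respect to $\mu_p$ on $\{0,1\}^n$.
   Context: For $0<p<1$, $\mu_p$ denotes the product measure on $\{0,1\}^n$ given by $\mu_p(x)=p^{\sum_i x_i}(1-p)^{n-\sum_i x_i}$; $\mu_{1/2}$ is the uniform measure. Elements of $\{0,1\}^n$ are identified with subsets of $\{1,\dots,n\}$ in the natural way. For $S,T\subseteq\{1,\dots,n\}$ let $u_S(T)=\big(-\sqrt{(1-p)/p}\big)^{|S\cap T|}\big(\sqrt{p/(1-p)}\big)^{|S\setminus T|}$ (for $p=1/2$, $u_S(T)=(-1)^{|S\cap T|}$). The $u_S$ form an orthonormal basis of $L^2(\mu_p)$, and every $f$ has a unique expansion $f=\sum_S\hat f(S)u_S$ with $\hat f(S)=\mathbb{E}_{\mu_p}[f u_S]$ (the Fourier–Walsh coefficients w.r.t. $\mu_p$). Reduction: write $y\in\{0,1\}^{mn}$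 as $y=(y^1,\dots,y^n)$ with $y^i=(y^i_1,\dots,y^i_m)\in\{0,1\}^m$, where $y^i_j$ is the coordinate $(i-1)m+j$ of $y$. Let $\mathrm{Bin}(y^i)=\sum_{j=0}^{m-1}2^j y^i_{m-j}\in\{0,\dots,2^m-1\}$, and $h:\{0,1\}^m\to\{0,1\}$, $h(y^i)=1$ if $\mathrm{Bin}(y^i)\ge 2^m-t$ and $h(y^i)=0$ otherwise. Then $\mathrm{Red}(f)=g$ is defined by $g(y)=f(h(y^1),\dots,h(y^n))$. Here $\log$ denotes the base-2 logarithm. *)

From HB Require Import structures.
From mathcomp Require Import all_boot all_order all_algebra.
From mathcomp Require Import all_classical all_reals all_analysis.
Set Implicit Arguments.
Unset Strict Implicit.
Unset Printing Implicit Defensive.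
Import Order.TTheory GRing.Theory Num.Theory.
Local Open Scope ring_scope.

(* Points of {0,1}^N are identified with subsets of 'I_N (0-based coordinates). *)

Definition mu_p {R : realType} (N : nat) (p : R) (x : {set 'I_N}) : R :=
  p ^+ #|x| * (1 - p) ^+ (N - #|x|)%N.

Definition u_S {R : realType} (N : nat) (p : R) (S T : {set 'I_N}) : R :=
  (- Num.sqrt ((1 - p) / p)) ^+ #|S :&: T| * (Num.sqrt (p / (1 - p))) ^+ #|S :\: T|.

Definition fourier {R : realType} (N : nat) (p : R) (f : {set 'I_N} -> R)
  (S : {set 'I_N}) : R :=
  \sum_(T : {set 'I_N}) mu_p p T * (f T * u_S p S T).

Definition level_weight {R : realType} (N : nat) (p : R) (f : {set 'I_N} -> R)
  (d : nat) : R :=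
  \sum_(S : {set 'I_N} | #|S| == d) (fourier p f S) ^+ 2.

Definition coord (N : nat) (y : {set 'I_N}) (k : nat) : bool :=
  [exists k' : 'I_N, (val k' == k) && (k' \in y)].

(* Bin(y^i) for the 0-based block i: y^i_j (1-based j) is the 0-based
   coordinate i*m + (j-1); Bin(y^i) = sum_{j=0}^{m-1} 2^j y^i_{m-j}. *)
Definition Bin (m n : nat) (y : {set 'I_(m * n)}) (i : nat) : nat :=
  \sum_(j < m) 2 ^ j * coord y (i * m + (m - 1 - j)).

Definition h (m t n : nat) (y : {set 'I_(m * n)}) (i : nat) : bool :=
  (2 ^ m - t <= Bin y i)%N.

Definition Red {R : realType} (m : nat) (t : nat) {n : nat} (f : {set 'I_n} -> R)
  (y : {set 'I_(m * n)}) : R :=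
  f [set i : 'I_n | h t y i].

Definition log2 {R : realType} (x : R) : R := ln x / ln 2.
Arguments Red {R} m t {n} f y.

From Pilot Require Import Defs.
From HB Require Import structures.
From mathcomp Require Import all_boot all_order all_algebra.
From mathcomp Require Import all_classical all_reals all_analysis.
From mathcomp Require Import ring lra zify.
Import Order.TTheory GRing.Theory Num.Theory.
Set Implicit Arguments.
Unset Strict Implicit.
Unset Printing Implicit Defensive.

(* Split [y] into [n] blocks of [m] bits; [h] reads block [i] as the binary number
   [Bin y i] and returns 1 on its top [t] values, so each block is a [mu_p]-biased
   bit. Those top values all start with [k = floor (log2 (1 / p))] ones, hence
   for [S] and any choice of one of the first [k] positions [J i] in each block
   [i \in S], the uniform Fourier coefficient of [Red f] at the [|S|]-set
   [{(i, J i)}] is [(p / (1 - p)) ^ (|S| / 2)] times the [mu_p] coefficient of [f]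
   at [S]. These sets are distinct, [k ^ |S|] of them for each [S]. *)

Lemma sum_binary_digitsS m (b : nat -> bool) :
  \sum_(i < m.+1) 2 ^ i * b i = b 0 + 2 * \sum_(i < m) 2 ^ i * b i.+1.
Proof.
rewrite big_ord_recl /= expn0 mul1n; congr (_ + _).
by rewrite big_distrr; apply: eq_bigr => i _; rewrite /= expnS mulnA.
Qed.

Lemma sum_binary_digits_inj m (b b' : nat -> bool) :
  \sum_(i < m) 2 ^ i * b i = \sum_(i < m) 2 ^ i * b' i ->
  forall i, (i < m)%N -> b i = b' i.
Proof.
elim: m b b' => [//|m IH] b b'; rewrite !sum_binary_digitsS => E.
have E0 : b 0 = b' 0.
  by move: (congr1 odd E); rewrite !oddD /= !addbF !addbb !addbF; case: (b 0); case: (b' 0).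
move: E; rewrite E0 => /addnI/eqP; rewrite eqn_pmul2l // => /eqP E.
by case=> [//|i] Hi; apply: (IH (fun i => b i.+1) (fun i => b' i.+1)).
Qed.

Lemma sum_pow2 m : (\sum_(i < m) 2 ^ i).+1 = 2 ^ m.
Proof.
elim: m => [|m IH]; first by rewrite big_ord0.
by rewrite big_ord_recr /= -addSn IH expnS; lia.
Qed.

Lemma sum_binary_digits_lt m (b : nat -> bool) : (\sum_(i < m) 2 ^ i * b i < 2 ^ m)%N.
Proof. by rewrite -sum_pow2 ltnS; apply: leq_sum => i _; case: (b i); lia. Qed.

Lemma sum_binary_digits_le m (b : nat -> bool) i0 : (i0 < m)%N -> b i0 = false ->
  (\sum_(i < m) 2 ^ i * b i + 2 ^ i0 < 2 ^ m)%N.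
Proof.
move=> Hi Hb; rewrite -(sum_pow2 m) ltnS.
rewrite (bigD1 (Ordinal Hi)) //= [leqRHS](bigD1 (Ordinal Hi)) //= Hb muln0 add0n.
by rewrite addnC leq_add2l; apply: leq_sum => i _; case: (b i); lia.
Qed.

Lemma coord_val N (y : {set 'I_N}) (k : 'I_N) : Defs.coord y k = (k \in y).
Proof.
apply/existsP/idP => [[k' /andP[/eqP/val_inj -> //]]|yk].
by exists k; rewrite eqxx yk.
Qed.

(* Coordinate [j] of a block carries the weight [2 ^ (m - 1 - j)]: coordinate 0
   is the most significant bit, as in [Bin]. *)
Definition bin m (z : {set 'I_m}) : nat := \sum_(j < m) 2 ^ j * Defs.coord z (m - 1 - j).

Lemma bin_lt m (z : {set 'I_m}) : (bin z < 2 ^ m)%N.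
Proof. exact: (sum_binary_digits_lt m (fun j => Defs.coord z (m - 1 - j))). Qed.

Lemma bin_inj m : injective (@bin m).
Proof.
move=> z z' /(@sum_binary_digits_inj m (fun j => Defs.coord z (m - 1 - j))
                                        (fun j => Defs.coord z' (m - 1 - j))) E.
apply/setP => j.
have lt_j : (m - 1 - j < m)%N by have := ltn_ord j; lia.
have := E _ lt_j; have -> : (m - 1 - (m - 1 - j) = j)%N by have := ltn_ord j; lia.
by rewrite !coord_val.
Qed.

Lemma card_subsets (T : finType) : #|{set T}| = 2 ^ #|T|.
Proof. by rewrite -(cardsT {set T}) -powersetT card_powerset cardsT. Qed.

Lemma bin_bij m : bijective (fun z : {set 'I_m} => Ordinal (bin_lt z)).
Proof.
apply: inj_card_bij; last by rewrite card_subsets !card_ord.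
by move=> z z' /(congr1 val) /bin_inj.
Qed.

Definition top_block m t (z : {set 'I_m}) : bool := (2 ^ m - t <= bin z)%N.

Lemma leq_of_exp2_mul k t m : (0 < t)%N -> (2 ^ k * t <= 2 ^ m)%N -> (k <= m)%N.
Proof.
move=> t_gt0 le_kt; rewrite -(leq_exp2l _ _ (ltnSn 1)).
by apply: leq_trans le_kt; rewrite leq_pmulr.
Qed.

(* [bin z >= 2 ^ m - t >= 2 ^ m - 2 ^ (m - k)] forces the [k] leading bits. *)
Lemma top_block_lead_bits m t k (z : {set 'I_m}) (j : 'I_m) :
  (2 ^ k * t <= 2 ^ m)%N -> (j < k)%N -> top_block t z -> j \in z.
Proof.
rewrite /top_block => le_kt lt_jk le_bin; apply/negPn/negP => zNj.
have lt_j : (m - 1 - j < m)%N by have := ltn_ord j; lia.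
have bit_j : Defs.coord z (m - 1 - (m - 1 - j)) = false.
  have -> : (m - 1 - (m - 1 - j) = j)%N by have := ltn_ord j; lia.
  by rewrite coord_val (negbTE zNj).
have := @sum_binary_digits_le m (fun i => Defs.coord z (m - 1 - i)) _ lt_j bit_j.
rewrite -/(bin z) => lt_bin.
have t_gt0 : (0 < t)%N by have := bin_lt z; lia.
have le_km := leq_of_exp2_mul t_gt0 le_kt.
have le_t : (t <= 2 ^ (m - k))%N.
  by rewrite -(leq_pmul2l (expn_gt0 2 k)) -expnD subnKC.
have : (2 ^ (m - k) <= 2 ^ (m - 1 - j))%N by rewrite leq_exp2l //; lia.
lia.
Qed.

Local Open Scope ring_scope.

Lemma count_top_block (R : nzRingType) m t : (t <= 2 ^ m)%N ->
  \sum_(z : {set 'I_m}) (top_block t z)%:R = t%:R :> R.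
Proof.
move=> le_t; transitivity (\sum_(x < 2 ^ m) ((2 ^ m - t <= x)%N%:R : R)).
  by rewrite (reindex _ (onW_bij _ (bin_bij m))).
rewrite -(big_mkord xpredT (fun x => ((2 ^ m - t <= x)%N%:R : R))).
rewrite (big_cat_nat _ (leq_subr t _)) //= big_nat_cond big1 ?add0r; last first.
  by move=> i /andP[/andP[_ lt_i] _]; rewrite leqNgt lt_i.
rewrite big_nat_cond (eq_bigr (fun _ => 1)); last first.
  by move=> i /andP[/andP[-> _] _].
by rewrite -big_nat_cond sumr_const_nat subKn.
Qed.

Lemma sum_sign_mem (R : numFieldType) (T : finType) (j : T) :
  \sum_(z : {set T}) (if j \in z then -1 else 1 : R) = 0.
Proof.
pose flip (z : {set T}) := if j \in z then z :\ j else j |: z.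
have flipK : involutive flip.
  move=> z; rewrite {2}/flip; case: ifP => zj; rewrite /flip.
    by rewrite finset.setD11 finset.setD1K.
  by rewrite finset.setU11 finset.setU1K ?zj.
set s := LHS; have s_opp : s = - s.
  rewrite {1}/s (reindex_inj (inv_inj flipK)) -sumrN; apply: eq_bigr => z _.
  by rewrite /flip; case: (boolP (j \in z)) => _; rewrite ?finset.setD11 ?finset.setU11 ?opprK.
have : s *+ 2 = 0 by rewrite mulr2n {1}s_opp addNr.
by rewrite -mulr_natr => /eqP; rewrite mulf_eq0 pnatr_eq0 orbF => /eqP.
Qed.

Section Blocks.
Variables m n : nat.

Lemma block_index_lt (i : 'I_n) (j : 'I_m) : (i * m + j < m * n)%N.
Proof. by have := ltn_ord i; have := ltn_ord j; nia. Qed.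

Definition block_ord (i : 'I_n) (j : 'I_m) : 'I_(m * n) := Ordinal (block_index_lt i j).

Lemma block_ord_inj i j i' j' : block_ord i j = block_ord i' j' -> i = i' /\ j = j'.
Proof.
move=> /(congr1 val) /= E; have := ltn_ord j; have := ltn_ord j' => lt_j' lt_j.
have Ei : (i : nat) = i'.
  by have := congr1 (divn^~ m) E; rewrite !divnMDl ?divn_small //; lia.
by split; apply: val_inj => //=; lia.
Qed.

Definition blocks (y : {set 'I_(m * n)}) : {ffun 'I_n -> {set 'I_m}} :=
  [ffun i => [set j | block_ord i j \in y]].

Definition unblocks (F : {ffun 'I_n -> {set 'I_m}}) : {set 'I_(m * n)} :=
  [set k | [exists i, exists j, (k == block_ord i j) && (j \in F i)]].

Lemma unblocksK : cancel unblocks blocks.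
Proof.
move=> F; apply/ffunP => i; apply/setP => j; rewrite ffunE !inE.
apply/existsP/idP => [[i' /existsP[j' /andP[/eqP/block_ord_inj[-> ->] //]]]|Fij].
by exists i; apply/existsP; exists j; rewrite eqxx Fij.
Qed.

Lemma blocksK : cancel blocks unblocks.
Proof.
move=> y; apply/setP => k; rewrite inE.
apply/existsP/idP => [[i /existsP[j /andP[/eqP -> ]]]|yk].
  by rewrite ffunE inE.
have m_gt0 : (0 < m)%N by have := ltn_ord k; move: (k : nat); nia.
have lt_i : (k %/ m < n)%N.
  by rewrite ltn_divLR //; have := ltn_ord k; move: (k : nat); nia.
have Ek : k = block_ord (Ordinal lt_i) (Ordinal (ltn_pmod k m_gt0)).
  by apply: val_inj => /=; rewrite -divn_eq.
exists (Ordinal lt_i); apply/existsP; exists (Ordinal (ltn_pmod k m_gt0)).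
by rewrite -Ek eqxx ffunE inE -Ek yk.
Qed.

Lemma Bin_blocks (y : {set 'I_(m * n)}) (i : 'I_n) : Bin y i = bin (blocks y i).
Proof.
apply: eq_bigr => j _; have lt_j : (m - 1 - j < m)%N by have := ltn_ord j; lia.
rewrite -[(m - 1 - j)%N]/(nat_of_ord (Ordinal lt_j)).
by rewrite -[(_ + _)%N]/(nat_of_ord (block_ord i (Ordinal lt_j))) !coord_val ffunE inE.
Qed.

Lemma h_blocks t (y : {set 'I_(m * n)}) (i : 'I_n) : Defs.h t y i = top_block t (blocks y i).
Proof. by rewrite /Defs.h Bin_blocks. Qed.

Definition spread (S : {set 'I_n}) (J : {ffun 'I_n -> 'I_m}) : {set 'I_(m * n)} :=
  [set block_ord i (J i) | i in S].

Lemma graph_block_ord_inj (J : {ffun 'I_n -> 'I_m}) : injective (fun i => block_ord i (J i)).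
Proof. by move=> i i' /block_ord_inj[]. Qed.

Lemma card_spread S J : #|spread S J| = #|S|.
Proof. exact/card_imset/graph_block_ord_inj. Qed.

Lemma card_spreadI S J (y : {set 'I_(m * n)}) :
  #|spread S J :&: y| = #|[set i in S | J i \in blocks y i]|.
Proof.
rewrite -[RHS](card_imset _ (@graph_block_ord_inj J)); apply: eq_card => k.
rewrite inE; apply/andP/imsetP => [[/imsetP[i Si ->] yk]|[i]].
  by exists i => //; rewrite inE Si ffunE inE.
by rewrite inE ffunE inE => /andP[Si yk] ->; split=> //; apply: imset_f.
Qed.

Lemma spread_inj (j0 : 'I_m) (S S' : {set 'I_n}) (J J' : {ffun 'I_n -> 'I_m}) :
  {in ~: S, forall i, J i = j0} -> {in ~: S', forall i, J' i = j0} ->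
  spread S J = spread S' J' -> S = S' /\ J = J'.
Proof.
move=> J0 J0' E.
have mem_spread i S1 J1 S2 J2 : spread S1 J1 = spread S2 J2 -> i \in S1 ->
    exists2 i', i' \in S2 & block_ord i (J1 i) = block_ord i' (J2 i').
  move=> E12 Si; apply/imsetP.
  by have := imset_f (fun i => block_ord i (J1 i)) Si; rewrite -/(spread S1 J1) E12.
have ES : S = S'.
  apply/setP => i; apply/idP/idP => Si.
    by have [i' ? /block_ord_inj[-> _]] := mem_spread i _ _ _ _ E Si.
  by have [i' ? /block_ord_inj[-> _]] := mem_spread i _ _ _ _ (esym E) Si.
split=> //; apply/ffunP => i; have [Si|NSi] := boolP (i \in S).
  by have [i' _ /block_ord_inj[<- ->]] := mem_spread i _ _ _ _ E Si.
by rewrite J0 ?J0' ?inE -?ES.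
Qed.

End Blocks.

(* Off [S] the choice [J] is pinned to [j0], which makes [spread] injective. *)
Definition spread_family m n k (j0 : 'I_m) (S : {set 'I_n}) (J : {ffun 'I_n -> 'I_m}) :=
  [forall i, if i \in S then (J i < k)%N else J i == j0].

Lemma spread_family_inj m n k (j0 : 'I_m) :
  {in [pred SJ : {set 'I_n} * {ffun 'I_n -> 'I_m} | spread_family k j0 SJ.1 SJ.2] &,
    injective (fun SJ => spread SJ.1 SJ.2)}.
Proof.
move=> [S J] [S' J'] /forallP /= famJ /forallP /= famJ' E.
have [||-> ->] // := spread_inj (j0 := j0) _ _ E => i; rewrite inE => /negbTE NSi.
  by have := famJ i; rewrite NSi => /eqP.
by have := famJ' i; rewrite NSi => /eqP.
Qed.

Lemma prod_if_mem (R : comNzRingType) (I : finType) (A B : {set I}) (a b : R) :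
  \prod_(i in A) (if i \in B then b else a) = b ^+ #|A :&: B| * a ^+ #|A :\: B|.
Proof.
rewrite (bigID (mem B)) /= -!prodr_const; congr (_ * _); apply: eq_big.
- by move=> i; rewrite !inE.
- by move=> i /andP[_ ->].
- by move=> i; rewrite !inE andbC.
- by move=> i /andP[_ /negbTE ->].
Qed.

Lemma mu_p_prod (R : realType) N (p : R) (x : {set 'I_N}) :
  mu_p p x = \prod_(i : 'I_N) (if i \in x then p else 1 - p).
Proof.
rewrite (eq_bigl (fun i => i \in [set: 'I_N])); last by move=> i; rewrite inE.
rewrite prod_if_mem finset.setTI finset.setTD /mu_p; congr (_ * _ ^+ _).
by have := cardsC x; rewrite card_ord; lia.
Qed.

Lemma mu_p_half (R : realType) N (y : {set 'I_N}) : mu_p (1 / 2 : R) y = (1 / 2) ^+ N.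
Proof.
rewrite mu_p_prod (eq_bigr (fun _ => 1 / 2)) ?prodr_const ?card_ord //.
by move=> i _; case: ifP => // _; field.
Qed.

Lemma u_S_half_spread (R : realType) m n S J (y : {set 'I_(m * n)}) :
  u_S (1 / 2 : R) (spread S J) y = \prod_(i in S) (if J i \in blocks y i then -1 else 1).
Proof.
rewrite /u_S; have -> : (1 - 1 / 2) / (1 / 2) = 1 :> R by field.
have -> : (1 / 2) / (1 - 1 / 2) = 1 :> R by field.
rewrite sqrtr1 expr1n mulr1 card_spreadI.
rewrite (eq_bigr (fun i => if i \in [set i | J i \in blocks y i] then -1 else 1)).
  by rewrite prod_if_mem expr1n mulr1; congr (_ ^+ _); apply: eq_card => i; rewrite !inE.
by move=> i _; rewrite inE.
Qed.

Lemma natr_negb (R : pzRingType) (b : bool) : (~~ b)%:R = 1 - b%:R :> R.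
Proof. by case: b; rewrite ?subrr ?subr0. Qed.

Section BlockSums.
Variables (R : realType) (m t : nat).
Hypothesis le_t : (t <= 2 ^ m)%N.

Let p : R := t%:R / (2 ^ m)%:R.
Let q : R := (1 / 2) ^+ m.

Lemma q_pow2 : q = (2 ^ m)%:R^-1.
Proof. by rewrite /q div1r natrX exprVn. Qed.

Lemma q_mul_t : q * t%:R = p.
Proof. by rewrite q_pow2 mulrC. Qed.

Lemma sum_block_indicator (c : bool) :
  \sum_(z : {set 'I_m}) q * (top_block t z == c)%:R = if c then p else 1 - p.
Proof.
rewrite -mulr_sumr; case: c.
  by under eq_bigr do rewrite eqb_id; rewrite (count_top_block R le_t) q_mul_t.
under eq_bigr do rewrite eqbF_neg natr_negb.
rewrite sumrB (count_top_block R le_t) sumr_const card_subsets card_ord mulrBr q_mul_t.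
by rewrite q_pow2 mulVf // pnatr_eq0 expn_eq0.
Qed.

Lemma sum_block_signed k (j : 'I_m) (c : bool) :
  (2 ^ k * t <= 2 ^ m)%N -> (j < k)%N ->
  \sum_(z : {set 'I_m}) q * ((top_block t z == c)%:R * (if j \in z then -1 else 1))
    = if c then - p else p.
Proof.
move=> le_kt lt_jk; rewrite -mulr_sumr.
have top_sign z :
    (top_block t z)%:R * (if j \in z then -1 else 1) = - (top_block t z)%:R :> R.
  have [top_z|] := boolP (top_block t z); last by rewrite mul0r oppr0.
  by rewrite (top_block_lead_bits le_kt lt_jk top_z) mul1r.
case: c.
  under eq_bigr do rewrite eqb_id top_sign.
  by rewrite sumrN (count_top_block R le_t) mulrN q_mul_t.
under eq_bigr do rewrite eqbF_neg natr_negb mulrBl mul1r top_sign opprK.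
by rewrite big_split /= sum_sign_mem add0r (count_top_block R le_t) q_mul_t.
Qed.

End BlockSums.

Lemma prod_indicator_eq (R : comNzRingType) (I : finType) (X x : {set I}) :
  \prod_(i : I) (((i \in X) == (i \in x))%:R : R) = (X == x)%:R.
Proof.
have [->|neq] := eqVneq X x; first by rewrite big1 // => i _; rewrite eqxx.
have [i Xi] : exists i, (i \in X) != (i \in x).
  by apply/existsP; move: neq; apply: contraNT; rewrite negb_exists => /forallP E;
     apply/eqP/setP => i; have := E i; rewrite negbK => /eqP.
by rewrite (bigD1 i) //= (negbTE Xi) mul0r.
Qed.

Lemma ratio_pow2_gt0 (R : realType) m t : (0 < t)%N -> 0 < t%:R / (2 ^ m)%:R :> R.
Proof. by move=> t_gt0; rewrite divr_gt0 // ltr0n // expn_gt0. Qed.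

Lemma ratio_pow2_lt1 (R : realType) m t : (t < 2 ^ m)%N -> t%:R / (2 ^ m)%:R < 1 :> R.
Proof. by move=> lt_t; rewrite ltr_pdivrMr ?mul1r ?ltr_nat // ltr0n expn_gt0. Qed.

Lemma sqrt_odds_mulN (R : realType) (p : R) : 0 < p -> p < 1 ->
  Num.sqrt (p / (1 - p)) * - Num.sqrt ((1 - p) / p) = -1.
Proof.
move=> p_gt0 p_lt1; rewrite mulrN -sqrtrM; last by apply: divr_ge0; lra.
have -> : p / (1 - p) * ((1 - p) / p) = 1 by field; apply/andP; split; apply/eqP; lra.
by rewrite sqrtr1.
Qed.

Lemma sqrt_odds_sqr (R : realType) (p : R) : 0 < p -> p < 1 ->
  (1 - p) * Num.sqrt (p / (1 - p)) ^+ 2 = p.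
Proof.
move=> p_gt0 p_lt1.
by rewrite sqr_sqrtr; [field; apply/eqP; lra | apply: divr_ge0; lra].
Qed.

Section FourierOfRed.
Variables (R : realType) (m t n : nat) (f : {set 'I_n} -> R).
Variables (S : {set 'I_n}) (J : {ffun 'I_n -> 'I_m}) (k : nat).
Hypothesis t_gt0 : (0 < t)%N.
Hypothesis lt_t : (t < 2 ^ m)%N.
Hypothesis le_kt : (2 ^ k * t <= 2 ^ m)%N.
Hypothesis J_lt : {in S, forall i, J i < k}%N.

Let p : R := t%:R / (2 ^ m)%:R.
Let q : R := (1 / 2) ^+ m.
Let a : R := Num.sqrt (p / (1 - p)).
Let p_gt0 : 0 < p := ratio_pow2_gt0 R m t_gt0.
Let p_lt1 : p < 1 := ratio_pow2_lt1 R lt_t.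
Definition block_factor (x : {set 'I_n}) (i : 'I_n) : R :=
  if i \in S then (if i \in x then - p else p) else (if i \in x then p else 1 - p).

Lemma prod_block_factor (x : {set 'I_n}) :
  \prod_(i : 'I_n) block_factor x i = a ^+ #|S| * (mu_p p x * u_S p S x).
Proof.
rewrite mu_p_prod /u_S -prod_if_mem (big_mkcond (mem S)) /=.
rewrite -[a ^+ _]prodr_const (big_mkcond (mem S)) -!big_split /=.
apply: eq_bigr => i _; rewrite /block_factor; case: (i \in S); case: (i \in x).
- by rewrite mulrCA sqrt_odds_mulN ?mulrN1.
- by rewrite -{1}(sqrt_odds_sqr p_gt0 p_lt1) -/a; ring.
- by rewrite mul1r mulr1.
- by rewrite mul1r mulr1.
Qed.

Definition block_weight (x : {set 'I_n}) (i : 'I_n) (z : {set 'I_m}) : R :=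
  q * ((top_block t z == (i \in x))%:R
       * (if i \in S then (if J i \in z then -1 else 1) else 1)).

Lemma sum_block_weight x i : \sum_(z : {set 'I_m}) block_weight x i z = block_factor x i.
Proof.
rewrite /block_weight /block_factor; case: ifPn => [Si|_].
  exact: (sum_block_signed R (ltnW lt_t) (i \in x) le_kt (J_lt Si)).
under eq_bigr do rewrite mulr1; exact: (sum_block_indicator R (ltnW lt_t) (i \in x)).
Qed.

(* Writing [f] at [[set i | top_block t (F i)]] as an indicator-weighted sum over
   all [x] makes the summand factorise over the blocks. *)
Lemma Red_term_expand (F : {ffun 'I_n -> {set 'I_m}}) :
  q ^+ n * (f [set i | top_block t (F i)] * \prod_(i in S) (if J i \in F i then -1 else 1))
  = \sum_(x : {set 'I_n}) f x * \prod_(i : 'I_n) block_weight x i (F i).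
Proof.
have indicator (x : {set 'I_n}) : \prod_(i : 'I_n) ((top_block t (F i) == (i \in x))%:R : R)
    = ([set i | top_block t (F i)] == x)%:R.
  by rewrite -prod_indicator_eq; apply: eq_bigr => i _; rewrite inE.
have term (x : {set 'I_n}) : f x * \prod_(i : 'I_n) block_weight x i (F i)
    = q ^+ n * ((f x * ([set i | top_block t (F i)] == x)%:R)
                * \prod_(i in S) (if J i \in F i then -1 else 1)).
  rewrite /block_weight !big_split /= indicator -big_mkcond prodr_const card_ord.
  by ring.
have pick : \sum_(x : {set 'I_n}) f x * ([set i | top_block t (F i)] == x)%:R
    = f [set i | top_block t (F i)].
  rewrite (bigD1 [set i | top_block t (F i)]) //= eqxx mulr1 big1 ?addr0 // => x /negbTE nx.
  by rewrite eq_sym nx mulr0.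
by rewrite (eq_bigr _ (fun x _ => term x)) -mulr_sumr -mulr_suml pick.
Qed.

Lemma fourier_Red_spread :
  fourier (1 / 2) (Red m t f) (spread S J) = a ^+ #|S| * fourier p f S.
Proof.
have term y : mu_p (1 / 2 : R) y * (Red m t f y * u_S (1 / 2) (spread S J) y)
    = q ^+ n * (f [set i | top_block t (blocks y i)]
                * \prod_(i in S) (if J i \in blocks y i then -1 else 1)).
  rewrite mu_p_half u_S_half_spread /q -exprM mulnC; congr (_ * (f _ * _)).
  by apply/setP => i; rewrite !inE h_blocks.
rewrite /fourier (eq_bigr _ (fun y _ => term y)).
rewrite (reindex (@unblocks m n)) /=; last first.
  by apply: onW_bij; exists (@blocks m n); [exact: unblocksK | exact: blocksK].
under eq_bigr do rewrite unblocksK Red_term_expand.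
rewrite exchange_big mulr_sumr; apply: eq_bigr => x _.
rewrite -mulr_sumr -bigA_distr_bigA.
under eq_bigr do rewrite sum_block_weight.
by rewrite prod_block_factor; ring.
Qed.

End FourierOfRed.

Lemma sum_sub_le (R : numDomainType) (I : finType) (P Q : pred I) (w : I -> R) :
  (forall i, P i -> Q i) -> (forall i, 0 <= w i) ->
  \sum_(i | P i) w i <= \sum_(i | Q i) w i.
Proof.
move=> PQ w_ge0; rewrite [leRHS](bigID P) /= -[leLHS]addr0 lerD ?sumr_ge0 //.
rewrite le_eqVlt; apply/orP; left; apply/eqP/eq_bigl => i.
by case Pi: (P i); rewrite ?(PQ _ Pi) ?andbF.
Qed.

Lemma count_spread_families (R : comNzRingType) m n (S : {set 'I_n}) k (j0 : 'I_m) :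
  (k <= m)%N ->
  \sum_(J : {ffun 'I_n -> 'I_m}) (spread_family k j0 S J)%:R = (k ^ #|S|)%:R :> R.
Proof.
move=> le_km.
have count_lt : \sum_(j < m) ((j < k)%N%:R : R) = k%:R.
  rewrite -(big_mkord xpredT (fun j => ((j < k)%N%:R : R))).
  rewrite (big_cat_nat (n := k) (leq0n k) le_km) /=.
  rewrite [X in _ + X]big_nat_cond [X in _ + X]big1 ?addr0 => [|j /andP[/andP[le_kj _] _]].
    rewrite big_nat_cond (eq_bigr (fun _ => 1)) => [|j /andP[/andP[_ ->] _] //].
    by rewrite -big_nat_cond sumr_const_nat subn0.
  by rewrite ltnNge le_kj.
pose ok i (j : 'I_m) := if i \in S then (j < k)%N else j == j0.
have forall_prod (J : {ffun 'I_n -> 'I_m}) :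
    (spread_family k j0 S J)%:R = \prod_(i : 'I_n) (ok i (J i))%:R :> R.
  rewrite /spread_family; have [/forallP okJ|] := boolP [forall i, ok i (J i)].
    by rewrite big1 // => i _; rewrite okJ.
  by rewrite negb_forall => /existsP[i /negbTE nok]; rewrite (bigD1 i) //= nok mul0r.
rewrite (eq_bigr _ (fun J _ => forall_prod J)).
rewrite -(bigA_distr_bigA (fun i j => (ok i j)%:R : R)) /=.
rewrite (eq_bigr (fun i => if i \in S then k%:R else 1)) => [|i _].
  by rewrite -big_mkcond prodr_const natrX.
rewrite /ok; case: (i \in S) => //.
by rewrite (bigD1 j0) //= eqxx big1 ?addr0 // => j /negbTE ->.
Qed.

Lemma floor_log2_spec (R : realType) (x : R) : 1 <= x ->
  exists k : nat, Num.floor (log2 x) = k%:Z /\ 2 ^+ k <= x.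
Proof.
move=> x_ge1; have ln2_gt0 : 0 < ln (2 : R) by apply: ln_gt0; lra.
have fl_ge0 : 0 <= Num.floor (log2 x).
  by rewrite floor_ge0 /log2; apply: divr_ge0; [exact: ln_ge0 | exact: ltW].
exists `|Num.floor (log2 x)|%N; split; first by rewrite gez0_abs.
have := floor_le (log2 x); rewrite -(gez0_abs fl_ge0).
set k := `|_|%N; rewrite /log2 ler_pdivlMr // => fl_le.
have : ln ((2 : R) ^+ k) <= ln x by move: fl_le; rewrite pmulrn lnXn ?ltr0n // -mulr_natl.
by rewrite ler_ln ?posrE ?exprn_gt0 //; lra.
Qed.

Lemma level_weight_ge_spread (R : realType) (p : R) m n (g : {set 'I_(m * n)} -> R)
    d k (j0 : 'I_m) :
  \sum_(SJ : {set 'I_n} * {ffun 'I_n -> 'I_m} |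
          (#|SJ.1| == d) && spread_family k j0 SJ.1 SJ.2)
     fourier p g (spread SJ.1 SJ.2) ^+ 2
  <= level_weight p g d.
Proof.
pose D := [pred SJ : {set 'I_n} * {ffun 'I_n -> 'I_m} |
             (#|SJ.1| == d) && spread_family k j0 SJ.1 SJ.2].
have inj : {in D &, injective (fun SJ => spread SJ.1 SJ.2)}.
  by move=> x y /andP[_ fx] /andP[_ fy]; apply: (spread_family_inj (k := k) (j0 := j0)).
rewrite -[leLHS](big_imset (fun T => fourier p g T ^+ 2) inj) /=.
apply: sum_sub_le => [T /imsetP[[S J] /andP[/eqP <- _] ->]|T]; last exact: sqr_ge0.
by rewrite card_spread.
Qed.

Lemma sum_spread_families_fourier (R : realType) m t n (f : {set 'I_n} -> R) d k
    (j0 : 'I_m) :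
  (0 < t)%N -> (t < 2 ^ m)%N -> (2 ^ k * t <= 2 ^ m)%N ->
  let p : R := t%:R / (2 ^ m)%:R in
  \sum_(SJ : {set 'I_n} * {ffun 'I_n -> 'I_m} |
          (#|SJ.1| == d) && spread_family k j0 SJ.1 SJ.2)
     fourier (1 / 2) (Red m t f) (spread SJ.1 SJ.2) ^+ 2
  = (k%:R * (p / (1 - p))) ^+ d * level_weight p f d.
Proof.
move=> t_gt0 lt_t le_kt p.
have odds_ge0 : 0 <= p / (1 - p).
  by rewrite divr_ge0 ?subr_ge0 ?ltW ?ratio_pow2_gt0 ?ratio_pow2_lt1.
rewrite -(pair_big_dep (fun S : {set 'I_n} => #|S| == d)
            (fun S J => spread_family k j0 S J)
            (fun S J => fourier (1 / 2) (Red m t f) (spread S J) ^+ 2)) /=.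
rewrite /level_weight mulr_sumr; apply: eq_bigr => S /eqP card_S.
have fourier_sq J : spread_family k j0 S J ->
    fourier (1 / 2) (Red m t f) (spread S J) ^+ 2 = (p / (1 - p)) ^+ d * fourier p f S ^+ 2.
  move=> /forallP famJ.
  rewrite (@fourier_Red_spread R m t n f S J k t_gt0 lt_t le_kt); last first.
    by move=> i Si; have := famJ i; rewrite Si.
  by rewrite exprMn -exprM mulnC exprM sqr_sqrtr // card_S.
rewrite (eq_bigr _ fourier_sq) big_mkcond /=.
rewrite (eq_bigr (fun J =>
   (spread_family k j0 S J)%:R * ((p / (1 - p)) ^+ d * fourier p f S ^+ 2))).
  rewrite -mulr_suml count_spread_families ?(leq_of_exp2_mul t_gt0 le_kt) //.
  by rewrite card_S natrX mulrA -exprMn.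
by move=> J _; case: ifP; rewrite ?mul1r ?mul0r.
Qed.

Theorem theorem1p2 (R : realType) (m t n : nat) (f : {set 'I_n} -> R) (d : nat) :
  (1 <= m)%N -> (1 <= t)%N -> (t <= 2 ^ (m - 1))%N ->
  (1 <= d)%N -> (d <= n)%N ->
  let p : R := t%:R / (2 ^ m)%:R in
  ((p * (Num.floor (log2 (1 / p)))%:~R) / (1 - p)) ^+ d * level_weight p f d
    <= level_weight (1 / 2 : R) (Red m t f) d.
Proof.
move=> m_gt0 t_gt0 le_t _ _; cbv zeta; set p : R := t%:R / _.
have lt_t : (t < 2 ^ m)%N by apply: leq_ltn_trans le_t _; rewrite ltn_exp2l //; lia.
have p_gt0 : 0 < p := ratio_pow2_gt0 R m t_gt0.
have [k [-> pow_k]] : exists k : nat, Num.floor (log2 (1 / p)) = k%:Z /\ 2 ^+ k <= 1 / p.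
  by apply: floor_log2_spec; rewrite ler_pdivlMr // mul1r ltW ?ratio_pow2_lt1.
have le_kt : (2 ^ k * t <= 2 ^ m)%N.
  rewrite -(ler_nat R) natrM natrX -ler_pdivlMr ?ltr0n //.
  by move: pow_k; rewrite /p div1r invf_div.
apply: le_trans (level_weight_ge_spread _ _ d k (Ordinal m_gt0)).
rewrite (sum_spread_families_fourier f d _ t_gt0 lt_t le_kt) -/p.
by rewrite mulrA [p * _]mulrC.
Qed.
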